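(* If $(g(z),f(z))$ is a Riordan matrix that is a pseudo-involution, then for every positive integer $n$ the Riordan matrix $(g(z)^n, f(z))$ is also a pseudo-involution.
   Context: A Riordan matrix is a pair $(g(z),f(z))$ of formal power series over $\mathbb{C}$ with $g(z)=\sum_{n\ge 0} g_n z^n$, $g_0\neq 0$, and $f(z)=\sum_{n\ge 1} f_n z^n$ with $f_1\neq 0$; it represents the infinite lower-triangular matrix whose $k$-th column ($k\ge 0$) has generating function $g(z)f(z)^k$. Riordan matrices form a group under matrix multiplication, where $(g(z),f(z))*(h(z),l(z))=(g(z)h(f(z)),\,l(f(z)))$ and the identity is $(1,z)$. Let $M=(1,-z)$. A Riordan matrix $L$ is called a pseudo-involution if $(L*M)*(L*M)=(1,z)$. *)

From HB Require Import structures.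
From mathcomp Require Import all_boot all_order all_algebra.
From mathcomp Require Import complex.
From mathcomp Require Import Rstruct.
Set Implicit Arguments. Unset Strict Implicit. Unset Printing Implicit Defensive.
Import Order.TTheory GRing.Theory Num.Theory.
Local Open Scope ring_scope.

Definition C : Type := complex Rdefinitions.R.

Definition fps := nat -> C.

Definition fps_one : fps := fun n => if n == 0%N then 1 else 0.
Definition fps_X : fps := fun n => if n == 1%N then 1 else 0.
Definition fps_negX : fps := fun n => if n == 1%N then -1 else 0.

Definition fps_mul (a b : fps) : fps :=
  fun n => \sum_(i < n.+1) a i * b (n - i)%N.

Fixpoint fps_pow (a : fps) (k : nat) : fps :=
  match k with
  | 0%N => fps_one
  | k'.+1 => fps_mul a (fps_pow a k')
  end.

(* composition a(f(z)), meaningful when f has zero constant term; then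
   [z^n] f^k = 0 for k > n, so the sum below is the full coefficient. *)
Definition fps_comp (a f : fps) : fps :=
  fun n => \sum_(k < n.+1) a k * fps_pow f k n.

Definition is_riordan (g f : fps) : Prop :=
  g 0%N != 0 /\ f 0%N = 0 /\ f 1%N != 0.

Definition riordan_mul (L1 L2 : fps * fps) : fps * fps :=
  (fps_mul L1.1 (fps_comp L2.1 L1.2), fps_comp L2.2 L1.2).

Definition riordan_id : fps * fps := (fps_one, fps_X).
Definition riordan_M : fps * fps := (fps_one, fps_negX).

Definition pseudo_involution (L : fps * fps) : Prop :=
  let LM := riordan_mul L riordan_M in riordan_mul LM LM = riordan_id.

(* For L = (g, f) one computes L*M = (g, -f), so L is a pseudo-involution iff
   g(z) * g(-f(z)) = 1 and the second component (-f) o (-f) equals z.  Raising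
   g to the n-th power leaves the second component untouched and turns the
   first identity into (g * g(-f))^n = 1^n = 1, because composition with -f
   is multiplicative.

   Series are bare coefficient sequences here, so the algebra is done on
   polynomials: the truncation of a series to its first N coefficients is a
   polynomial, and truncation commutes with products, powers and composition
   (by an inner series with zero constant term) up to agreement of the first
   N coefficients. *)
Set Warnings "-notation-overridden,-ambiguous-paths".
From mathcomp Require Import all_boot all_order all_algebra.
From mathcomp Require Import zify complex Rstruct.
From Stdlib Require Import FunctionalExtensionality.
Set Implicit Arguments. Unset Strict Implicit. Unset Printing Implicit Defensive.
Import GRing.Theory.
Local Open Scope ring_scope.

Lemma sum_ord_pad (V : nmodType) (F : nat -> V) (K1 K2 : nat) :
  (forall i, (K1 <= i)%N -> F i = 0) -> (K1 <= K2)%N ->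
  \sum_(i < K1) F i = \sum_(i < K2) F i.
Proof.
move=> F_vanish le_K12.
rewrite -!(big_mkord xpredT) (big_cat_nat (leq0n K1) le_K12) /=.
rewrite [X in _ + X]big_nat_cond [X in _ + X]big1 ?addr0 //.
by move=> i /andP[/andP[le_K1i _] _]; exact: F_vanish.
Qed.

Section AgreeModXn.
Variables (R : nzRingType) (N : nat).

Definition agree (p q : {poly R}) : Prop := forall i, (i < N)%N -> p`_i = q`_i.

Lemma agree_refl (p : {poly R}) : agree p p.
Proof. by []. Qed.

Lemma agree_sym (p q : {poly R}) : agree p q -> agree q p.
Proof. by move=> Epq i lt_iN; rewrite Epq. Qed.

Lemma agree_trans (p q r : {poly R}) : agree p q -> agree q r -> agree p r.
Proof. by move=> Epq Eqr i lt_iN; rewrite Epq ?Eqr. Qed.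

(* The i-th coefficient of a product only involves coefficients of index <= i. *)
Lemma agree_mul (p1 q1 p2 q2 : {poly R}) :
  agree p1 q1 -> agree p2 q2 -> agree (p1 * p2) (q1 * q2).
Proof.
move=> E1 E2 i lt_iN; rewrite !coefM; apply: eq_bigr => j _.
have le_ji := ltn_ord j.
by rewrite E1 ?E2 //; lia.
Qed.

Lemma agree_exp (p q : {poly R}) (k : nat) : agree p q -> agree (p ^+ k) (q ^+ k).
Proof.
move=> Epq; elim: k => [|k IHk]; first exact: agree_refl.
by rewrite !exprS; apply: agree_mul.
Qed.

End AgreeModXn.

Section CompositionLowCoefficients.
Variable R : comNzRingType.

Lemma coef_exp_low (P : {poly R}) (k m : nat) :
  P`_0 = 0 -> (m < k)%N -> (P ^+ k)`_m = 0.
Proof.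
move=> P0; elim: k m => [|k IHk] m lt_mk //.
rewrite exprS coefM big1 // => j _.
have le_jm := ltn_ord j.
have [->|j_neq0] := eqVneq (nat_of_ord j) 0%N; first by rewrite P0 mul0r.
by rewrite IHk ?mulr0 //; lia.
Qed.

Lemma coef_comp_low (p P : {poly R}) (m : nat) : P`_0 = 0 ->
  (p \Po P)`_m = \sum_(i < m.+1) p`_i * (P ^+ i)`_m.
Proof.
move=> P0; rewrite coef_comp_poly.
have pad_size := @sum_ord_pad _ (fun i => p`_i * (P ^+ i)`_m) (size p)
  (size p + m.+1).
have pad_m := @sum_ord_pad _ (fun i => p`_i * (P ^+ i)`_m) m.+1
  (size p + m.+1).
rewrite pad_size ?pad_m ?leq_addr ?leq_addl //.
- by move=> i lt_mi; rewrite coef_exp_low ?mulr0.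
- by move=> i le_pi; rewrite nth_default ?mul0r.
Qed.

Lemma agree_comp_l (N : nat) (p q P : {poly R}) :
  P`_0 = 0 -> agree N p q -> agree N (p \Po P) (q \Po P).
Proof.
move=> P0 Epq i lt_iN; rewrite !coef_comp_low //; apply: eq_bigr => j _.
have le_ji := ltn_ord j.
by rewrite Epq //; lia.
Qed.

Lemma agree_comp_r (N : nat) (p P Q : {poly R}) :
  agree N P Q -> agree N (p \Po P) (p \Po Q).
Proof.
move=> EPQ i lt_iN; rewrite !coef_comp_poly; apply: eq_bigr => j _.
by rewrite (agree_exp j EPQ).
Qed.

End CompositionLowCoefficients.

Section Truncation.
Variable N : nat.

(* The polynomial formed by the first N coefficients of a series; the
   coefficient ring is written as complex R, on which (unlike on the alias C)
   the ring structure is declared. *)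
Definition trunc (a : fps) : {poly complex Rdefinitions.R} := \poly_(i < N) a i.

Lemma trunc_coef (a : fps) (i : nat) : (i < N)%N -> (trunc a)`_i = a i.
Proof. by move=> lt_iN; rewrite coef_poly lt_iN. Qed.

Lemma trunc_coef0 (a : fps) : a 0%N = 0 -> (trunc a)`_0 = 0.
Proof. by move=> a0; rewrite coef_poly; case: ifP. Qed.

Lemma trunc_one : agree N (trunc fps_one) 1.
Proof. by move=> i lt_iN; rewrite trunc_coef // coef1 /fps_one; case: eqP. Qed.

Lemma trunc_negX : agree N (trunc fps_negX) (- 'X).
Proof.
move=> i lt_iN; rewrite trunc_coef // coefN coefX /fps_negX.
by case: eqP; rewrite ?oppr0.
Qed.

Lemma trunc_mul (a b : fps) : agree N (trunc (fps_mul a b)) (trunc a * trunc b).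
Proof.
move=> i lt_iN; rewrite trunc_coef // coefM; apply: eq_bigr => j _.
have le_ji := ltn_ord j.
by rewrite !trunc_coef //; lia.
Qed.

Lemma trunc_pow (a : fps) (k : nat) : agree N (trunc (fps_pow a k)) (trunc a ^+ k).
Proof.
elim: k => [|k IHk] /=; first exact: trunc_one.
rewrite exprS; apply: agree_trans (trunc_mul _ _) _.
exact: agree_mul (agree_refl _) IHk.
Qed.

Lemma trunc_comp (a F : fps) : F 0%N = 0 ->
  agree N (trunc (fps_comp a F)) (trunc a \Po trunc F).
Proof.
move=> F0 i lt_iN; rewrite trunc_coef // coef_comp_low ?trunc_coef0 //.
apply: eq_bigr => j _; have le_ji := ltn_ord j.
by rewrite trunc_coef -?(trunc_pow F j lt_iN) ?trunc_coef //; lia.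
Qed.

End Truncation.

Lemma fps_eq_trunc (a b : fps) : (forall N, agree N (trunc N a) (trunc N b)) -> a = b.
Proof.
move=> Eab; apply: functional_extensionality => n.
by rewrite -(@trunc_coef n.+1 a) // -(@trunc_coef n.+1 b) // Eab.
Qed.

Lemma fps_pow_coef0 (a : fps) (k : nat) : fps_pow a k 0%N = a 0%N ^+ k.
Proof.
elim: k => [|k IHk] /=; first by rewrite expr0.
by rewrite /fps_mul big_ord1 subnn IHk exprS.
Qed.

Section PseudoInvolutionFactor.
Variables (N : nat) (f : fps).
Hypothesis f0 : f 0%N = 0.

Lemma trunc_mulM_fst (h : fps) :
  agree N (trunc N (riordan_mul (h, f) riordan_M).1) (trunc N h).
Proof.
rewrite /riordan_mul /=.
apply: agree_trans (trunc_mul _ _) _.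
rewrite -[X in agree _ _ X]mulr1; apply: agree_mul (agree_refl _) _.
apply: agree_trans (trunc_comp _ f0) _.
apply: agree_trans (agree_comp_l (trunc_coef0 _ f0) (@trunc_one N)) _.
by rewrite comp_polyC; exact: agree_refl.
Qed.

Lemma trunc_mulM_snd (h : fps) :
  agree N (trunc N (riordan_mul (h, f) riordan_M).2) (- trunc N f).
Proof.
rewrite /riordan_mul /=.
apply: agree_trans (trunc_comp _ f0) _.
apply: agree_trans (agree_comp_l (trunc_coef0 _ f0) (@trunc_negX N)) _.
by rewrite raddfN /= comp_polyX; exact: agree_refl.
Qed.

Lemma trunc_LM_square_fst (h : fps) :
  agree N (trunc N (riordan_mul (riordan_mul (h, f) riordan_M)
                                (riordan_mul (h, f) riordan_M)).1)
          (trunc N h * (trunc N h \Po - trunc N f)).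
Proof.
have negf0 : fps_comp fps_negX f 0%N = 0.
  by rewrite /fps_comp big_ord1 /fps_negX mul0r.
apply: agree_trans (trunc_mul _ _) _.
apply: agree_mul (trunc_mulM_fst h) _.
apply: agree_trans (trunc_comp _ negf0) _.
apply: agree_trans (agree_comp_l (trunc_coef0 _ negf0) (trunc_mulM_fst h)) _.
exact: agree_comp_r (trunc_mulM_snd h).
Qed.

Lemma factor_pow (a : fps) (k : nat) :
  agree N (trunc N (fps_pow a k) * (trunc N (fps_pow a k) \Po - trunc N f))
          ((trunc N a * (trunc N a \Po - trunc N f)) ^+ k).
Proof.
have negf0 : (- trunc N f)`_0 = 0 by rewrite coefN trunc_coef0 ?oppr0.
rewrite exprMn -rmorphXn /=.
apply: agree_mul (trunc_pow _ _) _.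
exact: agree_comp_l negf0 (trunc_pow _ _).
Qed.

End PseudoInvolutionFactor.

Theorem proposition24 (g f : fps) :
  is_riordan g f -> pseudo_involution (g, f) ->
  forall n : nat, (0 < n)%N ->
    is_riordan (fps_pow g n) f /\ pseudo_involution (fps_pow g n, f).
Proof.
move=> [g0 [f0 f1]] pi_g k _; split.
  by split=> //; rewrite fps_pow_coef0 expf_neq0.
(* The second component of (L*M)^2 does not depend on the first one of L. *)
move: pi_g; rewrite /pseudo_involution => -[g_factor_one second_id].
congr pair => //; apply: fps_eq_trunc => N.
have factor_one : agree N (trunc N g * (trunc N g \Po - trunc N f)) 1.
  apply: agree_trans (agree_sym (trunc_LM_square_fst f0 g)) _.
  by rewrite /= g_factor_one; exact: trunc_one.
apply: agree_trans (trunc_LM_square_fst f0 _) _.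
apply: agree_trans (factor_pow f0 g k) _.
apply: agree_trans (agree_exp k factor_one) _.
by rewrite expr1n; exact: agree_sym (@trunc_one N).
Qed.
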